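(* Let $(H,G)$ be a finite Gelfand pair with notation as in the context, where index $i=1$ corresponds to the diagonal orbit $O_1$ and index $j=1$ to the trivial representation $T_1$. Then the matrix $C_{ij}=(\mathrm{X}_i,\Psi_j)$ satisfies $$\sum_i C_{ij}=\delta_{1j}|X|,\qquad \sum_j C_{ij}=\delta_{i1}|X| .$$
   Context: Let $G$ be a finite group, $H\le G$ a subgroup, $X=G/H$ with the left $G$-action, $x_0=H\in X$. $\mathbb{C}[X\times X]^G$ is the space of complex functions on $X\times X$ invariant under the diagonal $G$-action, with convolution $(f\times g)(x,z)=\sum_{y\in X}f(x,y)g(y,z)$ and Hermitian inner product $(a,b)=\sum_{x,y\in X}a(x,y)\overline{b(x,y)}$. $(H,G)$ is a Gelfand pair if $(\mathbb{C}[X\times X]^G,\times)$ is commutative; equivalently the permutation representation $\mathbb{C}[X]$, $(gf)(x)=f(g^{-1}x)$, decomposes as $\mathbb{C}[X]=\bigoplus_{j}T_j$ with $T_j$ pairwise non-isomorphic irreducible $G$-subrepresentations; $T_1$ denotes the constants. Each $T_j$ carries a $G$-invariant Hermitian inner product $\langle\cdot,\cdot\rangle$ (linear in the first variable) and contains an $H$-invariant vector $\theta_j$ with $\langle\theta_j,\theta_j\rangle=1$. The spherical function of $T_j$ is $\psi_j(g)=\frac{\dim T_j}{|X|}\langle T_j(g)\theta_j,\theta_j\rangle$; $\Psi_j(gH,g'H):=\psi_j(g^{-1}g')$. The $G$-orbits on $X\times X$ are $O_1,\dots,O_k$, with $O_1$ the diagonal, $\mathrm{X}_i$ is the characteristic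 function of $O_i$, and $o_i=\{x\in X:(x_0,x)\in O_i\}$. *)

From HB Require Import structures.
From mathcomp Require Import all_boot all_order all_algebra all_fingroup all_field.
From mathcomp Require Import mxrepresentation.
Set Implicit Arguments. Unset Strict Implicit. Unset Printing Implicit Defensive.
Import Order.TTheory GRing.Theory Num.Theory.
Local Open Scope ring_scope.

Section GelfandDefs.
Variables (gT : finGroupType) (G H : {group gT}).

Definition Xc : {set {set gT}} := lcosets H G.
Definition nX : nat := #|Xc|.
(* enumeration of X, used to index C[X] = 'rV[algC]_nX *)
Definition cosX (i : 'I_nX) : {set gT} := enum_val i.

(* Right-action matrix: (f *m permX g) (x) = f (g x), i.e. f *m permX g = g^-1 . f
   where (g . f)(x) = f(g^-1 x) is the permutation representation. *)
Definition permX (g : gT) : 'M[algC]_nX :=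
  \matrix_(i, j) ((cosX i == (g *: cosX j)%g)%:R).

Lemma cosX_in (i : 'I_nX) : cosX i \in Xc.
Proof. exact: enum_valP. Qed.

Lemma permX_repr : mx_repr G permX.
Proof.
split.
  apply/matrixP=> i j; rewrite !mxE lcoset1.
  by rewrite (inj_eq enum_val_inj).
move=> x y Gx Gy; apply/matrixP=> i j; rewrite !mxE.
have Xyj : (y *: cosX j)%g \in Xc.
  case/lcosetsP: (cosX_in j) => z Gz ->.
  by apply/lcosetsP; exists (y * z)%g; rewrite ?groupM // lcosetM.
pose k := enum_rank_in Xyj (y *: cosX j)%g.
have ck : cosX k = (y *: cosX j)%g by rewrite /cosX enum_rankK_in.
rewrite (bigD1 k) //= !mxE ck eqxx mulr1 big1 ?addr0; first by rewrite lcosetM.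
move=> l nlk; rewrite !mxE; case: eqP => [el|]; last by rewrite mul0r.
by rewrite -ck (inj_eq enum_val_inj) (negbTE nlk) mulr0.
Qed.

Definition rX : mx_representation algC G nX := MxRepresentation permX_repr.

Definition formQ (Q : 'M[algC]_nX) (u v : 'rV[algC]_nX) : algC :=
  (u *m Q *m (map_mx (fun z : algC => z^*) v)^T) 0 0.

Definition inv_inner_on (U Q : 'M[algC]_nX) : Prop :=
  [/\ forall u v, (u <= U)%MS -> (v <= U)%MS -> formQ Q v u = (formQ Q u v)^*,
      forall u, (u <= U)%MS -> u != 0 -> 0 < formQ Q u u
    & forall g u v, g \in G -> (u <= U)%MS -> (v <= U)%MS ->
        formQ Q (u *m rX g) (v *m rX g) = formQ Q u v].

(* Spherical function psi(g) = dim T / |X| * <T(g) theta, theta>,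
   with T(g) theta = theta *m rX g^-1. *)
Definition spherical (T Q : 'M[algC]_nX) (theta : 'rV[algC]_nX) (g : gT) : algC :=
  (\rank T)%:R / nX%:R * formQ Q (theta *m rX g^-1%g) theta.

Definition Psi (T Q : 'M[algC]_nX) (theta : 'rV[algC]_nX) (x y : {set gT}) : algC :=
  spherical T Q theta ((repr x)^-1 * repr y)%g.

Definition orbitsXX : {set {set ({set gT} * {set gT})}} :=
  [set [set ((g *: p.1)%g, (g *: p.2)%g) | g in G] | p in setX Xc Xc].

Definition diagXX : {set ({set gT} * {set gT})} := [set (x, x) | x in Xc].

(* (f, g) = sum_{x,y} f(x,y) conj(g(x,y)) with f the characteristic function of O. *)
Definition Cmat (O : {set ({set gT} * {set gT})}) (F : {set gT} -> {set gT} -> algC) : algC :=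
  \sum_(x in Xc) \sum_(y in Xc) ((x, y) \in O)%:R * (F x y)^*.

End GelfandDefs.

Arguments formQ {gT} G H Q u v.
Arguments inv_inner_on {gT} G H U Q.
Arguments spherical {gT} G H T Q theta g.
Arguments Psi {gT} G H T Q theta x y.

(* Let P_j be the projection of C[X] onto T_j along the other components.
   Since the T_j are pairwise non-isomorphic, P_j commutes with G, so by Schur's
   lemma P_j is self-adjoint, the invariant form on T_j is a multiple of the
   standard one, and the H-fixed vector theta_j is a multiple of x0 P_j; the
   normalisation of theta_j then gives Psi_j(x, y) = P_j(y, x).  Column sums:
   sum_j P_j = 1, so sum_j Psi_j is the indicator of the diagonal, which meets
   only the diagonal orbit.  Row sums: the X_i add up to 1, and the entries of
   P_j add up to those of the row 1 P_j, which is 1 or 0 according as j = 1 or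
   not, since the constants span T_1. *)

From HB Require Import structures.
From mathcomp Require Import all_boot all_order all_algebra all_fingroup all_field.
From mathcomp Require Import mxrepresentation.
Set Implicit Arguments. Unset Strict Implicit. Unset Printing Implicit Defensive.
Import Order.TTheory GRing.Theory Num.Theory.
Local Open Scope ring_scope.
Local Open Scope sesquilinear_scope.

Lemma idem_factor_mulmx1 (F : fieldType) m r (C : 'M[F]_(m, r)) (B : 'M[F]_(r, m)) L R :
  L *m C = 1%:M -> B *m R = 1%:M -> C *m B *m (C *m B) = C *m B -> B *m C = 1%:M.
Proof.
move=> LC BR /(congr1 (fun M => L *m M *m R)) /=.
by rewrite !mulmxA LC mul1mx -!mulmxA BR !mulmx1.
Qed.

Lemma mxtrace_idem (F : fieldType) n (A : 'M[F]_n) :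
  A *m A = A -> \tr A = (\rank A)%:R.
Proof.
move=> AA; have defA := mulmx_base A.
have [L LC] := row_fullP (col_base_full A).
have [R BR] := row_freeP (row_base_free A).
have BC : row_base A *m col_base A = 1%:M.
  by apply: (idem_factor_mulmx1 LC BR); rewrite defA.
by rewrite -{1}defA mxtrace_mulC BC mxtrace1.
Qed.

Section DirectSumProjections.
Variables (F : fieldType) (n : nat) (I : finType) (T : I -> 'M[F]_n).
Hypothesis dirT : mxdirect (\sum_j T j).
Hypothesis fullT : (\sum_j T j == 1%:M)%MS.

(* Locked, since rewriting with [mulmxA] would otherwise unfold [proj_mx]. *)
Fact sum_proj_key : unit. Proof. by []. Qed.
Definition sum_proj := locked_with sum_proj_key
  (fun j => proj_mx (T j) (\sum_(i | i != j) T i)%MS).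
Canonical sum_proj_unlockable := [unlockable fun sum_proj].

Lemma mulmx_sum_proj i j m (W : 'M_(m, n)) : (W <= T i)%MS ->
  W *m sum_proj j = if i == j then W else 0.
Proof.
move=> sWi; have dxT : (T j :&: \sum_(i | i != j) T i = 0)%MS.
  by move/mxdirect_sumsP: dirT; apply.
rewrite [sum_proj]unlock; have [eij|ij] := eqVneq i j.
  by rewrite -eij in dxT *; exact: proj_mx_id.
apply: proj_mx_0 => //; apply: submx_trans sWi _.
by apply: (sumsmx_sup i); rewrite // eq_sym.
Qed.

Lemma sum_proj_sub j m (W : 'M_(m, n)) : (W *m sum_proj j <= T j)%MS.
Proof. by rewrite [sum_proj]unlock proj_mx_sub. Qed.

Lemma sumsmx_mulmx_eq p (A B : 'M_(n, p)) :
  (forall i, T i *m A = T i *m B) -> A = B.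
Proof.
move=> eqAB; have /sub_sumsmxP[U defI] : (1%:M <= \sum_i T i)%MS.
  by rewrite (eqmxP fullT).
rewrite -[A]mul1mx -[B]mul1mx defI !mulmx_suml.
by apply: eq_bigr => i _; rewrite -!mulmxA eqAB.
Qed.

Lemma mulmx_sum_projT i j : T i *m sum_proj j = if i == j then T i else 0.
Proof. exact: mulmx_sum_proj. Qed.

Lemma sum_sum_proj : \sum_j sum_proj j = 1%:M.
Proof.
apply: sumsmx_mulmx_eq => i; rewrite mulmx1 mulmx_sumr (bigD1 i) //=.
rewrite mulmx_sum_projT eqxx big1 ?addr0 // => k ki.
by rewrite mulmx_sum_projT eq_sym (negbTE ki).
Qed.

Lemma sum_projM i j :
  sum_proj i *m sum_proj j = if i == j then sum_proj i else 0.
Proof. by have := mulmx_sum_proj j (sum_proj_sub i 1%:M); rewrite mul1mx. Qed.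

Lemma mxrank_sum_proj j : \rank (sum_proj j) = \rank (T j).
Proof.
apply/eqP; rewrite eqn_leq !mxrankS //; last by rewrite -[sum_proj j]mul1mx sum_proj_sub.
by have := mulmx_sum_projT j j; rewrite eqxx => <-; apply: submxMl.
Qed.

Lemma mxtrace_sum_proj j : \tr (sum_proj j) = (\rank (T j))%:R.
Proof. by rewrite mxtrace_idem ?mxrank_sum_proj // sum_projM eqxx. Qed.

Variables (gT : finGroupType) (G : {group gT}) (rG : mx_representation F G n).
Hypothesis modT : forall j, mxmodule rG (T j).

Lemma cent_sum_proj j : centgmx rG (sum_proj j).
Proof.
apply/centgmxP=> g Gg; apply: sumsmx_mulmx_eq => i.
have sTg : (T i *m rG g <= T i)%MS by exact: (mxmoduleP (modT i)).
rewrite mulmxA mulmx_sum_projT mulmxA (mulmx_sum_proj _ sTg).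
by case: eqP; rewrite ?mul0mx.
Qed.

End DirectSumProjections.

Section SchurScalar.
Variables (F : closedFieldType) (gT : finGroupType) (G : {group gT}) (n : nat).
Variable rG : mx_representation F G n.

Lemma mxsimple_cent_scalar (U : 'M_n) f :
  mxsimple rG U -> centgmx rG f -> (U *m f <= U)%MS -> exists a, U *m f = a *: U.
Proof.
move=> simU cGf sUfU; pose B := row_base U.
have /submxP[D defBf] : (B *m f <= B)%MS.
  by rewrite !eq_row_base (submx_trans _ sUfU) ?submxMr ?eq_row_base.
have [a /eigenvalueP[v vD nz_v]] : exists a, eigenvalue D a.
  have [_ nzU _] := simU.
  have /closed_rootP[a Da] : size (char_poly D) != 1%N.
    by rewrite size_char_poly eqSS mxrank_eq0.
  by exists a; rewrite eigenvalue_root_char.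
have nz_vB : v *m B != 0 by rewrite mulmx_free_eq0 ?row_base_free.
have vBU : (v *m B <= U)%MS by rewrite -(eq_row_base U) submxMl.
have vBf : v *m B *m f = a *: (v *m B) by rewrite -mulmxA defBf mulmxA vD scalemxAl.
have cGfa : centgmx rG (f - a%:M).
  apply/centgmxP=> g Gg.
  by rewrite mulmxBl mulmxBr mul_mx_scalar mul_scalar_mx (centgmxP cGf).
exists a; apply/eqP; rewrite -subr_eq0 -mul_mx_scalar -mulmxBr.
apply: contraR nz_vB => /(mx_Schur_inj simU (centgmx_hom _ cGfa)) capU0.
rewrite -submx0 -capU0 sub_capmx vBU; apply/sub_kermxP.
by rewrite mulmxBr vBf mul_mx_scalar subrr.
Qed.

Variables (I : finType) (T : I -> 'M[F]_n).
Hypothesis simT : forall j, mxsimple rG (T j).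
Hypothesis nisoT : forall i j, i != j -> ~ mx_iso rG (T i) (T j).
Hypothesis dirT : mxdirect (\sum_j T j).
Hypothesis fullT : (\sum_j T j == 1%:M)%MS.

Let modT j : mxmodule rG (T j) := mxsimple_module (simT j).

Lemma cent_stable_comp f i : centgmx rG f -> (T i *m f <= T i)%MS.
Proof.
move=> cGf; have offdiag k : k != i -> T i *m (f *m sum_proj T k) = 0.
  move=> ki; apply/eqP; apply: contraT => nz; case: (nisoT (i := i) (j := k)).
    by rewrite eq_sym.
  apply: mx_Schur_iso (simT i) (simT k) _ _ nz; last by rewrite mulmxA sum_proj_sub.
  apply/centgmx_hom/centgmxP=> g Gg.
  by rewrite -mulmxA (centgmxP (cent_sum_proj dirT fullT modT k)) // !mulmxA (centgmxP cGf).
rewrite -[T i *m f]mulmx1 -(sum_sum_proj dirT fullT) mulmx_sumr (bigD1 i) //=.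
by rewrite big1 ?addr0 ?sum_proj_sub // => k ki; rewrite -mulmxA offdiag.
Qed.

Lemma cent_comp_scalar f j : centgmx rG f -> exists a, T j *m f = a *: T j.
Proof.
by move=> cGf; exact: (mxsimple_cent_scalar (simT j) cGf (cent_stable_comp j cGf)).
Qed.

Lemma cent_sum_proj_decomp f : centgmx rG f ->
  exists a : I -> F, f = \sum_i a i *: sum_proj T i.
Proof.
move=> cGf; have [a Ta] := fin_all_exists (fun i => cent_comp_scalar i cGf).
exists a; apply: (sumsmx_mulmx_eq fullT) => k; rewrite Ta mulmx_sumr (bigD1 k) //=.
rewrite -scalemxAr mulmx_sum_projT // eqxx big1 ?addr0 // => i ik.
by rewrite -scalemxAr mulmx_sum_projT // eq_sym (negbTE ik) scaler0.
Qed.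

End SchurScalar.

Section ConjugateTranspose.
Variable C : numClosedFieldType.

Lemma trmxC_mul m p q (A : 'M[C]_(m, p)) (B : 'M[C]_(p, q)) :
  (A *m B)^t* = B^t* *m A^t*.
Proof. by rewrite trmx_mul map_mxM. Qed.

Lemma trmxCZ m p (a : C) (A : 'M[C]_(m, p)) : (a *: A)^t* = a^* *: A^t*.
Proof. by apply/matrixP=> i k; rewrite !mxE rmorphM. Qed.

Lemma trmxC0 m p : (0 : 'M[C]_(m, p))^t* = 0.
Proof. by apply/matrixP=> i k; rewrite !mxE conjC0. Qed.

Lemma mulmx_trmxC_eq0 m p (A : 'M[C]_(m, p)) : (A *m A^t* == 0) = (A == 0).
Proof.
apply/eqP/eqP=> [AA0|->]; last by rewrite mul0mx.
apply/matrixP=> i k; have : (A *m A^t*) i i == 0 by rewrite AA0 mxE.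
rewrite mxE psumr_eq0 => [/allP/(_ k (mem_index_enum k))|l _].
  by rewrite !mxE mul_conjC_eq0 => /eqP ->.
by rewrite !mxE mul_conjC_ge0.
Qed.

Lemma delta_form n (M : 'M[C]_n) a b :
  (delta_mx 0 a *m M *m (delta_mx 0 b)^t* : 'M_1) 0 0 = M a b.
Proof.
have -> : (delta_mx 0 b : 'rV[C]_n)^t* = delta_mx b 0.
  by apply/matrixP=> i k; rewrite !mxE conjC_nat andbC.
by rewrite -rowE -colE !mxE.
Qed.

Lemma form_mx_inj n (M N : 'M[C]_n) :
  (forall u v : 'rV_n, u *m M *m v^t* = u *m N *m v^t*) -> M = N.
Proof. by move=> eMN; apply/matrixP=> a b; rewrite -(delta_form M) -(delta_form N) eMN. Qed.

End ConjugateTranspose.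

Section UnitaryRepresentation.
Variables (C : numClosedFieldType) (gT : finGroupType) (G : {group gT}) (n : nat).
Variable rG : mx_representation C G n.
Hypothesis unitary_rG : forall g, g \in G -> rG g \is unitarymx.

Lemma trmxC_repr g : g \in G -> (rG g)^t* = rG g^-1%g.
Proof. by move=> Gg; rewrite -invmx_unitary ?unitary_rG ?repr_mxV. Qed.

Lemma cent_trmxC f : centgmx rG f -> centgmx rG (f ^t* ).
Proof.
move=> /centgmxP cGf; apply/centgmxP=> g Gg.
by rewrite -[rG g]trmxCK trmxC_repr // -!trmxC_mul cGf ?groupV.
Qed.

Lemma cent_sum_trmxC (a w : 'rV[C]_n) :
  centgmx rG (\sum_(g in G) (a *m rG g)^t* *m (w *m rG g)).
Proof.
apply/centgmxP=> k Gk; rewrite mulmx_suml mulmx_sumr.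
rewrite [RHS](reindex_astabs 'R k) ?astabsR ?(subsetP (normG G)) //=.
apply: eq_bigr => g Gg; rewrite !repr_mxM // !trmxC_mul !trmxC_repr //.
by rewrite !mulmxA -repr_mxM ?groupV // mulgV repr_mx1 mul1mx.
Qed.

End UnitaryRepresentation.

Section UnitaryDecomposition.
Variables (C : numClosedFieldType) (gT : finGroupType) (G : {group gT}) (n : nat).
Variable rG : mx_representation C G n.
Hypothesis unitary_rG : forall g, g \in G -> rG g \is unitarymx.
Variables (I : finType) (T : I -> 'M[C]_n).
Hypothesis simT : forall j, mxsimple rG (T j).
Hypothesis nisoT : forall i j, i != j -> ~ mx_iso rG (T i) (T j).
Hypothesis dirT : mxdirect (\sum_j T j).
Hypothesis fullT : (\sum_j T j == 1%:M)%MS.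

Let modT j : mxmodule rG (T j) := mxsimple_module (simT j).
Let cent_proj j : centgmx rG (sum_proj T j) := cent_sum_proj dirT fullT modT j.
Let comp_scalar := cent_comp_scalar simT nisoT dirT fullT.

Lemma sum_proj_trmxC j : (sum_proj T j)^t* = sum_proj T j.
Proof.
apply: (sumsmx_mulmx_eq fullT) => i; rewrite mulmx_sum_projT //.
have [a Ta] := comp_scalar i (cent_trmxC unitary_rG (cent_proj j)).
have nzTT : T i *m (T i)^t* != 0 by rewrite mulmx_trmxC_eq0; case: (simT i).
have : a *: (T i *m (T i)^t*) = if i == j then T i *m (T i)^t* else 0.
  rewrite scalemxAl -Ta -mulmxA -trmxC_mul mulmx_sum_projT //.
  by case: eqP; rewrite ?trmxC0 ?mulmx0.
rewrite Ta; case: eqP => _ /eqP.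
  rewrite -[X in _ == X]scale1r -subr_eq0 -scalerBl scalemx_eq0 (negbTE nzTT) orbF subr_eq0.
  by move=> /eqP->; rewrite scale1r.
by rewrite scalemx_eq0 (negbTE nzTT) orbF => /eqP->; rewrite scale0r.
Qed.

(* Sandwiching [Q] between the self-adjoint projection onto [T j] gives a
   matrix commuting with [rG], hence scalar on [T j]. *)
Lemma inv_form_scalar j (Q : 'M[C]_n) :
    (forall g (u v : 'rV_n), g \in G -> (u <= T j)%MS -> (v <= T j)%MS ->
       u *m rG g *m Q *m (v *m rG g)^t* = u *m Q *m v^t*) ->
  exists a, forall u v : 'rV_n, (u <= T j)%MS -> (v <= T j)%MS ->
    u *m Q *m v^t* = a *: (u *m v^t*).
Proof.
move=> invQ; pose P := sum_proj T j; pose B := P *m Q *m P.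
have PK (u : 'rV_n) : (u <= T j)%MS -> u *m P = u.
  by move=> uT; rewrite (mulmx_sum_proj dirT j uT) eqxx.
have formB (u v : 'rV_n) : u *m B *m v^t* = u *m P *m Q *m (v *m P)^t*.
  by rewrite trmxC_mul sum_proj_trmxC !mulmxA.
have cGB : centgmx rG B.
  apply/centgmxP=> g Gg.
  suff conjB : rG g *m B *m rG g^-1%g = B by rewrite -{1}conjB repr_mxKV.
  apply: form_mx_inj => u v.
  rewrite -(trmxC_repr unitary_rG Gg) mulmxA -mulmxA -trmxC_mul mulmxA !formB.
  rewrite -[RHS](invQ g) ?sum_proj_sub // -!(mulmxA u) -!(mulmxA v).
  by rewrite !(centgmxP (cent_proj j)).
have [a Ta] := comp_scalar j cGB.
exists a => u v uT vT; rewrite -{1}(PK u uT) -{1}(PK v vT) -formB.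
by have /submxP[D ->] := uT; rewrite -(mulmxA D) Ta -scalemxAr -!scalemxAl.
Qed.

End UnitaryDecomposition.

Section CosetAction.
Variables (gT : finGroupType) (G H : {group gT}).
Local Notation n := (nX G H).
Local Notation Xc := (Xc G H).
Local Notation rX := (rX G H).

Lemma H_in_Xc : (H : {set gT}) \in Xc.
Proof. by apply/lcosetsP; exists 1%g; rewrite ?group1 ?lcoset1. Qed.

Definition idxX (x : {set gT}) : 'I_n := enum_rank_in H_in_Xc x.
Definition idx0 : 'I_n := idxX H.

Lemma idxXK x : x \in Xc -> cosX (idxX x) = x.
Proof. exact: enum_rankK_in. Qed.

Lemma cosX_inj : injective (@cosX gT G H).
Proof. exact: enum_val_inj. Qed.

Lemma lcoset_Xc g x : g \in G -> x \in Xc -> (g *: x)%g \in Xc.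
Proof.
move=> Gg /lcosetsP[z Gz ->]; apply/lcosetsP.
by exists (g * z)%g; rewrite ?groupM ?lcosetM.
Qed.

Definition actX (g : gT) (i : 'I_n) : 'I_n := idxX (g *: cosX i)%g.

Lemma cosX_actX g i : g \in G -> cosX (actX g i) = (g *: cosX i)%g.
Proof. by move=> Gg; rewrite idxXK ?lcoset_Xc ?cosX_in. Qed.

Lemma actXM g h i : g \in G -> h \in G -> actX g (actX h i) = actX (g * h) i.
Proof. by move=> Gg Gh; apply: cosX_inj; rewrite !cosX_actX ?groupM ?lcosetM. Qed.

Lemma actX1 i : actX 1 i = i.
Proof. by apply: cosX_inj; rewrite cosX_actX ?lcoset1. Qed.

Lemma actXK g i : g \in G -> actX g^-1 (actX g i) = i.
Proof. by move=> Gg; rewrite actXM ?groupV // mulVg actX1. Qed.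

Lemma actX_transitive i : exists2 g, g \in G & actX g idx0 = i.
Proof.
have /lcosetsP[g Gg defi] := cosX_in i; exists g => //.
by apply: cosX_inj; rewrite cosX_actX // idxXK ?H_in_Xc.
Qed.

Lemma rXE g i k : rX g i k = (cosX i == g *: cosX k)%g%:R.
Proof. by rewrite /= mxE. Qed.

Lemma mulmx_rX m (A : 'M[algC]_(m, n)) g i k : g \in G ->
  (A *m rX g) i k = A i (actX g k).
Proof.
move=> Gg; rewrite mxE (bigD1 (actX g k)) //= rXE cosX_actX // eqxx mulr1.
rewrite big1 ?addr0 // => l nlk; rewrite rXE.
case: eqP => [el|_]; last by rewrite mulr0.
by case/eqP: nlk; apply: cosX_inj; rewrite cosX_actX.
Qed.

Lemma rX_mulmx m (A : 'M[algC]_(n, m)) g i k : g \in G ->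
  (rX g *m A) i k = A (actX g^-1 i) k.
Proof.
move=> Gg; rewrite mxE (bigD1 (actX g^-1 i)) //= rXE cosX_actX ?groupV //.
rewrite lcosetKV eqxx mul1r big1 ?addr0 // => l nli; rewrite rXE.
case: eqP => [el|_]; last by rewrite mul0r.
by case/eqP: nli; apply: cosX_inj; rewrite cosX_actX ?groupV // el lcosetK.
Qed.

Lemma trmxC_rX g : g \in G -> (rX g)^t* = rX g^-1%g.
Proof.
move=> Gg; apply/matrixP=> i k; rewrite !mxE conjC_nat.
suff -> : (cosX k == g *: cosX i)%g = (cosX i == g^-1 *: cosX k)%g by [].
by apply/eqP/eqP=> ->; rewrite ?lcosetK ?lcosetKV.
Qed.

Lemma unitary_rX g : g \in G -> rX g \is unitarymx.
Proof.
by move=> Gg; apply/unitarymxP; rewrite trmxC_rX // -repr_mxM ?groupV // mulgV repr_mx1.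
Qed.

Hypothesis sHG : H \subset G.

Lemma repr_Xc x : x \in Xc -> repr x \in x.
Proof. by case/lcosetsP=> a _ ->; apply: mem_repr (lcoset_refl H a). Qed.

Lemma repr_Xc_group x : x \in Xc -> repr x \in G.
Proof.
move=> xX; have := repr_Xc xX; case/lcosetsP: xX => a Ga ->.
by case/lcosetP=> h Hh ->; rewrite groupM // (subsetP sHG).
Qed.

Lemma actX_repr x : x \in Xc -> actX (repr x) idx0 = idxX x.
Proof.
move=> xX; apply: cosX_inj; rewrite cosX_actX ?repr_Xc_group // !idxXK ?H_in_Xc //.
by have := repr_Xc xX; case/lcosetsP: xX => a _ -> /lcoset_eqP.
Qed.

End CosetAction.

Section Orbits.
Variables (gT : finGroupType) (G H : {group gT}).
Local Notation Xc := (Xc G H).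

Definition orbXX (p : {set gT} * {set gT}) : {set {set gT} * {set gT}} :=
  [set ((g *: p.1)%g, (g *: p.2)%g) | g in G].

Lemma orbXX_refl p : p \in orbXX p.
Proof. by apply/imsetP; exists 1%g; rewrite ?group1 ?lcoset1 //; case: p. Qed.

Lemma orbXX_mem q p : q \in orbXX p -> orbXX q = orbXX p.
Proof.
case/imsetP=> g Gg ->; apply/setP=> r.
apply/imsetP/imsetP=> [[k Gk ->]|[k Gk ->]].
  by exists (k * g)%g; rewrite ?groupM //= !lcosetM.
by exists (k * g^-1)%g; rewrite ?groupM ?groupV //= -!lcosetM !mulgKV.
Qed.

Lemma orbXX_diag x : x \in Xc -> orbXX (x, x) = diagXX G H.
Proof.
move=> xX; apply/setP=> r; apply/imsetP/imsetP=> [[g Gg ->]|[z zX ->]].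
  by exists (g *: x)%g; rewrite ?lcoset_Xc.
case/lcosetsP: xX => a Ga ->; case/lcosetsP: zX => b Gb ->.
by exists (b * a^-1)%g; rewrite ?groupM ?groupV //= -lcosetM mulgKV.
Qed.

Lemma sum_orbitsXX_mem x y : x \in Xc -> y \in Xc ->
  \sum_(O in orbitsXX G H) ((x, y) \in O)%:R = 1 :> algC.
Proof.
move=> xX yX; have Oxy : orbXX (x, y) \in orbitsXX G H.
  by apply/imsetP; exists (x, y); rewrite ?inE ?xX ?yX.
rewrite (bigD1 _ Oxy) /= orbXX_refl big1 ?addr0 // => O /andP[].
case/imsetP=> p _ -> neO; apply/eqP; rewrite pnatr_eq0 eqb0.
by apply: contra neO => /orbXX_mem ->.
Qed.

Lemma orbitsXX_diag O x : O \in orbitsXX G H -> x \in Xc ->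
  ((x, x) \in O) = (O == diagXX G H).
Proof.
case/imsetP=> p _ ->; rewrite -/(orbXX p) => xX.
apply/idP/eqP=> [/orbXX_mem <-|->].
  exact: orbXX_diag.
by apply/imsetP; exists x.
Qed.

Lemma sum_Cmat (I : finType) O (K : I -> {set gT} -> {set gT} -> algC) :
  \sum_j Cmat G H O (K j) = Cmat G H O (fun x y => \sum_j K j x y).
Proof.
rewrite /Cmat exchange_big; apply: eq_bigr => x _; rewrite exchange_big.
by apply: eq_bigr => y _; rewrite rmorph_sum mulr_sumr.
Qed.

Lemma sum_orbits_Cmat K :
  \sum_(O in orbitsXX G H) Cmat G H O K = \sum_(x in Xc) \sum_(y in Xc) (K x y)^*.
Proof.
rewrite /Cmat exchange_big; apply: eq_bigr => x xX.
by rewrite exchange_big; apply: eq_bigr => y yX; rewrite -mulr_suml sum_orbitsXX_mem ?mul1r.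
Qed.

Lemma Cmat_delta O K : O \in orbitsXX G H ->
    {in Xc &, forall x y, K x y = (x == y)%:R} ->
  Cmat G H O K = (O == diagXX G H)%:R * (nX G H)%:R.
Proof.
move=> OX Kdelta; rewrite /Cmat.
transitivity (\sum_(x in Xc) (O == diagXX G H)%:R : algC); last first.
  by rewrite sumr_const mulr_natr.
apply: eq_bigr => x xX; rewrite (bigD1 x) //= Kdelta // eqxx rmorph1 mulr1.
rewrite orbitsXX_diag // big1 ?addr0 // => y /andP[yX nyx].
by rewrite Kdelta // eq_sym (negbTE nyx) rmorph0 mulr0.
Qed.

End Orbits.

Lemma formQE (gT : finGroupType) (G H : {group gT}) (Q : 'M[algC]_(nX G H)) u v :
  formQ G H Q u v = (u *m Q *m v^t*) 0 0.
Proof. by rewrite /formQ map_trmx. Qed.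

Lemma sum_Xc (gT : finGroupType) (G H : {group gT}) (F : 'I_(nX G H) -> algC) :
  \sum_(x in Xc G H) F (idxX G H x) = \sum_(i < nX G H) F i.
Proof. exact: esym (big_enum_rank _ F). Qed.

Section GelfandPair.
Variables (gT : finGroupType) (G H : {group gT}).
Hypothesis sHG : H \subset G.
Local Notation n := (nX G H).
Local Notation Xc := (Xc G H).
Local Notation rX := (rX G H).
Local Notation idx0 := (idx0 G H).
Local Notation e0 := (delta_mx 0 idx0 : 'rV[algC]_n).
Variables (I : finType) (T : I -> 'M[algC]_n) (j1 : I).
Variables (Q : I -> 'M[algC]_n) (theta : I -> 'rV[algC]_n).
Hypothesis simT : forall j, mxsimple rX (T j).
Hypothesis nisoT : forall i j, i != j -> ~ mx_iso rX (T i) (T j).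
Hypothesis dirT : mxdirect (\sum_j T j).
Hypothesis fullT : (\sum_j T j == 1%:M)%MS.
Hypothesis constT : (T j1 == (const_mx 1 : 'rV[algC]_n))%MS.
Hypothesis innQ : forall j, inv_inner_on G H (T j) (Q j).
Hypothesis thetaT : forall j, (theta j <= T j)%MS.
Hypothesis thetaH : forall j h, h \in H -> theta j *m rX h = theta j.
Hypothesis theta1 : forall j, formQ G H (Q j) (theta j) (theta j) = 1.

Local Notation P := (sum_proj T).
Let cent_proj j : centgmx rX (P j) :=
  cent_sum_proj dirT fullT (fun j => mxsimple_module (simT j)) j.

Lemma formQ_scalar j : exists a, forall u v, (u <= T j)%MS -> (v <= T j)%MS ->
  formQ G H (Q j) u v = a * (u *m v^t*) 0 0.
Proof.
have [_ _ invQ] := innQ j.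
have invQmx g (u v : 'rV_n) : g \in G -> (u <= T j)%MS -> (v <= T j)%MS ->
    u *m rX g *m Q j *m (v *m rX g)^t* = u *m Q j *m v^t*.
  by move=> Gg uT vT; rewrite [LHS]mx11_scalar [RHS]mx11_scalar -!formQE invQ.
have [a Qa] := inv_form_scalar (unitary_rX H) simT nisoT dirT fullT invQmx.
by exists a => u v uT vT; rewrite formQE Qa // mxE.
Qed.

Lemma rX_idx0 g : g \in G -> rX g idx0 idx0 = (g \in H)%:R.
Proof.
move=> Gg; rewrite rXE idxXK ?H_in_Xc //.
suff -> : ((H : {set gT}) == g *: H)%g = (g \in H) by [].
apply/eqP/idP=> [defH|Hg]; last by rewrite lcoset_id.
by rewrite defH lcoset_refl.
Qed.

(* [K] commutes with [rX], so it is a combination of the [P i], and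
   [e0 *m K = #|H| *: w] because [w] is [H]-fixed. *)
Lemma H_fixed_sum_proj j w : (w <= T j)%MS -> (forall h, h \in H -> w *m rX h = w) ->
  exists c, w = c *: (e0 *m P j).
Proof.
move=> wT wH; pose K := \sum_(g in G) (e0 *m rX g)^t* *m (w *m rX g).
have e0K : e0 *m K = #|H|%:R *: w.
  rewrite mulmx_sumr (eq_bigr (fun g => (g \in H)%:R *: w)) => [|g Gg]; last first.
    rewrite trmxC_mul !mulmxA [X in X *m w *m _]mx11_scalar mul_scalar_mx.
    rewrite -scalemxAl delta_form trmxC_rX // rX_idx0 ?groupV //.
    by have [/wH->|_] := boolP (g \in H); rewrite ?scale0r.
  rewrite -scaler_suml -[#|H|]sum1_card natr_sum big_mkcond [in RHS]big_mkcond /=.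
  congr (_ *: _); apply: eq_bigr => g _.
  by have [Hg|] := boolP (g \in H); rewrite ?(subsetP sHG g Hg); case: (g \in G).
have [a defK] : exists a : I -> algC, K = \sum_i a i *: P i.
  exact: cent_sum_proj_decomp simT nisoT dirT fullT _ (cent_sum_trmxC (unitary_rX H) e0 w).
have e0KP : e0 *m K *m P j = a j *: (e0 *m P j).
  rewrite defK mulmx_sumr mulmx_suml (bigD1 j) //= big1 ?addr0.
    by rewrite -scalemxAr -scalemxAl -mulmxA sum_projM // eqxx.
  move=> i ij; rewrite -scalemxAr -scalemxAl -mulmxA sum_projM //.
  by rewrite (negbTE ij) mulmx0 scaler0.
have nzH : #|H|%:R != 0 :> algC by rewrite pnatr_eq0 -lt0n cardG_gt0.
exists (a j / #|H|%:R); rewrite mulrC -scalerA -e0KP e0K -scalemxAl.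
by rewrite (mulmx_sum_proj dirT j wT) eqxx scalerA mulVf // scale1r.
Qed.

Lemma sum_proj_actX j g k l : g \in G -> P j (actX g k) (actX g l) = P j k l.
Proof.
move=> Gg; rewrite -mulmx_rX // (centgmxP (cent_proj j)) // rX_mulmx //.
by rewrite actXK.
Qed.

Lemma sum_proj_idx0 j : P j idx0 idx0 = (\rank (T j))%:R / n%:R.
Proof.
have n_gt0 : (0 < n)%N by apply: leq_ltn_trans (ltn_ord idx0).
have trP : \tr (P j) = n%:R * P j idx0 idx0.
  rewrite /mxtrace (eq_bigr (fun=> P j idx0 idx0)) ?sumr_const ?card_ord ?mulr_natl //.
  by move=> k _; have [g Gg <-] := actX_transitive k; rewrite sum_proj_actX.
by rewrite -(mxtrace_sum_proj dirT) trP mulrC mulKf // pnatr_eq0 -lt0n.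
Qed.

(* [theta j] is a multiple of [e0 *m P j] and [Q j] a multiple of the standard
   form on [T j]; [theta1] says the product of the two constants is [n / dim T j]. *)
Lemma spherical_sum_proj j g : g \in G ->
  spherical G H (T j) (Q j) (theta j) g = P j (actX g idx0) idx0.
Proof.
have [c defth] := H_fixed_sum_proj (thetaT j) (thetaH j).
have [a Qa] := formQ_scalar j.
have form h : h \in G -> formQ G H (Q j) (theta j *m rX h^-1%g) (theta j)
    = a * (c * c^*) * P j (actX h idx0) idx0.
  move=> Gh; have Gh' := groupVr Gh.
  rewrite Qa ?thetaT ?(submx_trans _ (mxmoduleP (mxsimple_module (simT j)) _ Gh')) //;
    last by rewrite submxMr.
  rewrite defth trmxCZ trmxC_mul (sum_proj_trmxC (unitary_rX H) simT nisoT dirT fullT).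
  have scalemx11E (k : algC) (M : 'M_1) : (k *: M) 0 0 = k * M 0 0 by rewrite mxE.
  rewrite -!scalemxAl -scalemxAr !scalemx11E.
  rewrite -(mulmxA e0 (P j)) (centgmxP (cent_proj j)) // !mulmxA.
  rewrite -(mulmxA _ (P j) (P j)) sum_projM // eqxx -(mulmxA e0) delta_form.
  by rewrite rX_mulmx // invgK !mulrA.
have := form 1%g (group1 G).
rewrite invg1 repr_mx1 mulmx1 theta1 actX1 sum_proj_idx0 => norm1.
by move=> Gg; rewrite /spherical form // mulrA [_ / _ * _]mulrC -norm1 mul1r.
Qed.

Lemma Psi_sum_proj j x y : x \in Xc -> y \in Xc ->
  Psi G H (T j) (Q j) (theta j) x y = P j (idxX G H y) (idxX G H x).
Proof.
move=> xX yX; have Gx := repr_Xc_group sHG xX; have Gy := repr_Xc_group sHG yX.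
rewrite /Psi spherical_sum_proj ?groupM ?groupV // -(sum_proj_actX _ _ _ Gx).
by rewrite actXM ?groupM ?groupV // mulKVg !actX_repr.
Qed.

Lemma sum_Psi x y : x \in Xc -> y \in Xc ->
  \sum_j Psi G H (T j) (Q j) (theta j) x y = (x == y)%:R.
Proof.
move=> xX yX; under eq_bigr do rewrite Psi_sum_proj //.
rewrite -summxE sum_sum_proj // mxE.
suff -> : (idxX G H y == idxX G H x) = (x == y) by [].
by apply/eqP/eqP=> [eyx|->] //; rewrite -(idxXK xX) -(idxXK yX) eyx.
Qed.

Lemma sum_conj_Psi j :
  \sum_(x in Xc) \sum_(y in Xc) (Psi G H (T j) (Q j) (theta j) x y)^*
    = (j == j1)%:R * n%:R.
Proof.
have const1T : ((const_mx 1 : 'rV[algC]_n) <= T j1)%MS by rewrite (eqmxP constT).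
have constP := mulmx_sum_proj dirT j const1T.
transitivity (\sum_(k < n) ((const_mx 1 : 'rV_n) *m P j) 0 k)^*.
  rewrite rmorph_sum -sum_Xc; apply: eq_bigr => x xX; rewrite mxE rmorph_sum.
  rewrite -sum_Xc; apply: eq_bigr => y yX.
  by rewrite Psi_sum_proj // !mxE mul1r.
rewrite constP eq_sym; case: eqP => _; last first.
  by rewrite big1 ?rmorph0 ?mul0r // => k; rewrite mxE.
by rewrite (eq_bigr (fun=> 1)) => [|k]; rewrite ?mxE // sumr_const card_ord mul1r conjC_nat.
Qed.

End GelfandPair.

Theorem mainTheorem8 (gT : finGroupType) (G H : {group gT}) (sHG : H \subset G)
  (I : finType) (T : I -> 'M[algC]_(nX G H)) (j1 : I)
  (Q : I -> 'M[algC]_(nX G H)) (theta : I -> 'rV[algC]_(nX G H))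
  (simT : forall j, mxsimple (rX G H) (T j))
  (nisoT : forall i j, i != j -> ~ mx_iso (rX G H) (T i) (T j))
  (dirT : mxdirect (\sum_j T j))
  (fullT : (\sum_j T j == 1%:M)%MS)
  (constT : (T j1 == (const_mx 1 : 'rV[algC]_(nX G H)))%MS)
  (innQ : forall j, inv_inner_on G H (T j) (Q j))
  (thetaT : forall j, (theta j <= T j)%MS)
  (thetaH : forall j h, h \in H -> theta j *m rX G H h = theta j)
  (theta1 : forall j, formQ G H (Q j) (theta j) (theta j) = 1) :
  (forall j, \sum_(O in orbitsXX G H) Cmat G H O (Psi G H (T j) (Q j) (theta j))
               = (j == j1)%:R * (nX G H)%:R)
  /\
  (forall O, O \in orbitsXX G H ->
     \sum_j Cmat G H O (Psi G H (T j) (Q j) (theta j))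
       = (O == diagXX G H)%:R * (nX G H)%:R).
Proof.
split=> [j | O OX].
  by rewrite sum_orbits_Cmat
    (sum_conj_Psi sHG simT nisoT dirT fullT constT innQ thetaT thetaH theta1).
rewrite (sum_Cmat G H O (fun j => Psi G H (T j) (Q j) (theta j))).
apply: Cmat_delta => // x y xX yX.
by rewrite (sum_Psi sHG simT nisoT dirT fullT innQ thetaT thetaH theta1 xX yX).
Qed.
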